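(* Fix a constant $\Delta$. There is no LCL problem on general graphs of maximum degree at most $\Delta$ with mending radius between $\omega(1)$ and $o(\log n)$: if such an LCL problem $\Pi$ is $T$-mendable for some function $T$ with $T(n)=o(\log n)$, then $\Pi$ is $T'$-mendable for some constant function $T'$.
   Context: A locally verifiable problem $\Pi$ on a graph family $\mathcal{G}$ is given by a set $\Sigma$ of input labels, a set $\Gamma$ of output labels and a verifier $\psi$ with verification radius $r$: $\psi(G,\lambda,v)\in\{\text{happy},\text{unhappy}\}$ depends only on the radius-$r$ neighborhood of $v$ (structure, inputs and outputs, up to isomorphism); $\lambda:V\to\Gamma$ is a solution if $\psi$ is happy everywhere. $\Pi$ is an LCL problem if $\Sigma,\Gamma$ are finite and all graphs in $\mathcal{G}$ have maximum degree bounded by a constant. Partial labelings are maps $\lambda:V\to\Gamma\cup\{\bot\}$; the relaxed verifier $\psi^*$ is happy at $v$ if some node within distance $r$ of $v$ has label $\bot$, and otherwise $\psi^*(G,\lambda,v)=\psi(G,\lambda',v)$ for any $\lambda':V\to\Gamma$ agreeing with $\lambda$ on the radius-$r$ neighborhood of $v$; $\psi^*$ accepts $\lambda$ if happy everywhere. Given $\lambda$ accepted by $\psi^*$ and node $v$, a $t$-mend of $\lambda$ at $v$ is a partial labeling $\mu$ accepted by $\psi^*$ with $\mu(v)\neq\bot$, $\mu(u)=\bot\Rightarrow\lambda(u)=\bot$, and $\mu(u)\neq\lambda(u)\Rightarrow\mathrm{dist}(u,v)\le t$. A verifier is $T$-mendable if for every $G\in\mathcal{G}$ with $n$ nodes,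 every $\lambda$ accepted by $\psi^*$ and every node $v$, a $T(n)$-mend at $v$ exists; $\Pi$ is $T$-mendable if some radius-$r$ verifier for $\Pi$ (accepting exactly the solutions of $\Pi$) is $T$-mendable. *)

From mathcomp Require Import all_boot.
Set Implicit Arguments. Unset Strict Implicit. Unset Printing Implicit Defensive.

Definition in_family (Delta n : nat) (e : rel 'I_n) : Prop :=
  symmetric e /\ irreflexive e /\ (forall v : 'I_n, #|[set u | e v u]| <= Delta).

Fixpoint within (n : nat) (e : rel 'I_n) (k : nat) (u v : 'I_n) : bool :=
  match k with
  | 0 => u == v
  | k'.+1 => within e k' u v || [exists w, within e k' u w && e w v]
  end.

(* A candidate verifier: for every graph, input labelling, (total) output
   labelling and node, answers happy (true) / unhappy (false). *)
Definition verifier (Sigma Gamma : finType) : Type :=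
  forall n : nat, rel 'I_n -> ('I_n -> Sigma) -> ('I_n -> Gamma) -> 'I_n -> bool.

Definition ball_iso (Sigma Gamma : finType) (r : nat)
  (n : nat) (e : rel 'I_n) (inp : 'I_n -> Sigma) (lab : 'I_n -> Gamma) (v : 'I_n)
  (n' : nat) (e' : rel 'I_n') (inp' : 'I_n' -> Sigma) (lab' : 'I_n' -> Gamma) (v' : 'I_n')
  : Prop :=
  exists (f : 'I_n -> 'I_n') (g : 'I_n' -> 'I_n),
    [/\ f v = v',
        (forall u, within e r v u -> within e' r v' (f u) /\ g (f u) = u),
        (forall u', within e' r v' u' -> within e r v (g u') /\ f (g u') = u'),
        (forall u w, within e r v u -> within e r v w -> e' (f u) (f w) = e u w) &
        (forall u, within e r v u -> inp' (f u) = inp u /\ lab' (f u) = lab u)].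

Definition is_verifier (Sigma Gamma : finType) (Delta r : nat)
  (psi : verifier Sigma Gamma) : Prop :=
  forall n (e : rel 'I_n) inp lab v n' (e' : rel 'I_n') inp' lab' v',
    in_family Delta e -> in_family Delta e' ->
    ball_iso r e inp lab v e' inp' lab' v' ->
    psi n e inp lab v = psi n' e' inp' lab' v'.

Definition same_solutions (Sigma Gamma : finType) (Delta : nat)
  (psi psi' : verifier Sigma Gamma) : Prop :=
  forall n (e : rel 'I_n) inp (lab : 'I_n -> Gamma), in_family Delta e ->
    ((forall v, psi n e inp lab v) <-> (forall v, psi' n e inp lab v)).

(* Relaxed verifier psi* on partial labellings (None = bottom). *)
Definition relaxed (Sigma Gamma : finType) (r : nat) (psi : verifier Sigma Gamma)
  (n : nat) (e : rel 'I_n) (inp : 'I_n -> Sigma) (mu : 'I_n -> option Gamma)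
  (v : 'I_n) : Prop :=
  (exists u, within e r v u /\ mu u = None) \/
  (forall lab : 'I_n -> Gamma,
     (forall u, within e r v u -> mu u = Some (lab u)) -> psi n e inp lab v).

Definition relaxed_accepts (Sigma Gamma : finType) (r : nat) (psi : verifier Sigma Gamma)
  (n : nat) (e : rel 'I_n) (inp : 'I_n -> Sigma) (mu : 'I_n -> option Gamma) : Prop :=
  forall v, relaxed r psi e inp mu v.

Definition is_mend (Sigma Gamma : finType) (r : nat) (psi : verifier Sigma Gamma)
  (n : nat) (e : rel 'I_n) (inp : 'I_n -> Sigma) (mu : 'I_n -> option Gamma)
  (v : 'I_n) (t : nat) (mu' : 'I_n -> option Gamma) : Prop :=
  [/\ relaxed_accepts r psi e inp mu',
      mu' v <> None,
      (forall u, mu' u = None -> mu u = None) &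
      (forall u, mu' u <> mu u -> within e t v u)].

Definition verifier_mendable (Sigma Gamma : finType) (Delta r : nat)
  (psi : verifier Sigma Gamma) (T : nat -> nat) : Prop :=
  forall n (e : rel 'I_n) inp (mu : 'I_n -> option Gamma),
    in_family Delta e -> relaxed_accepts r psi e inp mu ->
    forall v, exists mu', is_mend r psi e inp mu v (T n) mu'.

Definition problem_mendable (Sigma Gamma : finType) (Delta r : nat)
  (psi : verifier Sigma Gamma) (T : nat -> nat) : Prop :=
  exists psi' : verifier Sigma Gamma,
    [/\ is_verifier Delta r psi', same_solutions Delta psi psi' &
        verifier_mendable Delta r psi' T].

Definition little_o_log (T : nat -> nat) : Prop :=
  forall k, 0 < k -> exists N, forall n, N <= n -> k * T n <= trunc_log 2 n.

(* Let c := T n0, where n0 is so large that a ball of radius c + 3r, of size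
   at most (Delta+1)^(c + 3r), has at most n0 nodes; T = o(log n) makes such
   an n0 exist.  To mend a partial labeling at v in an arbitrary graph, copy
   the ball of radius c + 3r around v into a graph on n0 nodes, keep the labels
   up to distance c + 2r and put bottom beyond, mend there with radius c, and
   paste the mended c-ball back.  The verifier only sees radius-r balls, and
   every such ball that matters lies entirely inside the copy. *)

From mathcomp Require Import all_boot zify.
Set Implicit Arguments. Unset Strict Implicit. Unset Printing Implicit Defensive.

Lemma card_bigcup_le (I T : finType) (A : {pred I}) (F : I -> {set T}) :
  #|\bigcup_(i in A) F i| <= \sum_(i in A) #|F i|.
Proof.
elim/big_rec2: _ => [|i s U _ IH]; first by rewrite cards0.
exact: leq_trans (leq_card_setU _ _).1 (leq_add _ IH).
Qed.

Section Within.
Variables (n : nat) (e : rel 'I_n).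

Lemma within_refl k u : within e k u u.
Proof. by elim: k => [|k IH] /=; rewrite ?eqxx ?IH. Qed.

Lemma within_mono k k' u w : k <= k' -> within e k u w -> within e k' u w.
Proof.
move=> /subnKC <-; elim: (k' - k) => [|m IH] h; first by rewrite addn0.
by rewrite addnS /= IH.
Qed.

Lemma within_edge k x y : e x y -> within e k.+1 x y.
Proof.
move=> exy /=; apply/orP; right; apply/existsP; exists x.
by rewrite within_refl exy.
Qed.

Lemma within_trans a b u x y :
  within e a u x -> within e b x y -> within e (a + b) u y.
Proof.
move=> hux; elim: b y => [|b IH] y /=; first by move/eqP <-; rewrite addn0.
rewrite addnS /= => /orP [/IH -> //|/existsP [w /andP [/IH hw ewy]]].
by apply/orP; right; apply/existsP; exists w; rewrite hw.
Qed.

Lemma within_sym k u w : symmetric e -> within e k u w -> within e k w u.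
Proof.
move=> sym; elim: k u w => [|k IH] u w /=; first by rewrite eq_sym.
case/orP=> [/IH -> //|/existsP [x /andP [/IH hxu exw]]].
have ewx : e w x by rewrite sym.
by have := within_trans (within_edge 0 ewx) hxu; rewrite add1n.
Qed.

Definition ball k v := [set u | within e k v u].

Lemma mem_ball a k v u : a <= k -> within e a v u -> u \in ball k v.
Proof. by move=> ak /(within_mono ak); rewrite inE. Qed.

Lemma card_ball Delta k v :
  (forall x, #|[set u | e x u]| <= Delta) -> #|ball k v| <= Delta.+1 ^ k.
Proof.
move=> deg; elim: k => [|k IH].
  rewrite expn0 (_ : ball 0 v = [set v]) ?cards1 //.
  by apply/setP=> u; rewrite !inE eq_sym.
have sub : ball k.+1 v \subset \bigcup_(x in ball k v) (x |: [set u | e x u]).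
  apply/subsetP=> u; rewrite inE /= => /orP [hu|/existsP [x /andP [hx exu]]].
    by apply/bigcupP; exists u; rewrite ?inE ?eqxx.
  by apply/bigcupP; exists x; rewrite !inE ?hx ?exu ?orbT.
rewrite expnSr; apply: leq_trans (subset_leq_card sub) _.
apply: leq_trans (card_bigcup_le _ _) _.
apply: leq_trans (_ : _ <= \sum_(x in ball k v) Delta.+1) _.
  by apply: leq_sum => x _; rewrite cardsU1 -add1n leq_add ?leq_b1 ?deg.
by rewrite sum_nat_const leq_mul2r IH orbT.
Qed.

End Within.

Lemma ball_iso_sym (Sigma Gamma : finType) r
  n (e : rel 'I_n) (inp : 'I_n -> Sigma) (lab : 'I_n -> Gamma) v
  n' (e' : rel 'I_n') (inp' : 'I_n' -> Sigma) (lab' : 'I_n' -> Gamma) v' :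
  ball_iso r e inp lab v e' inp' lab' v' -> ball_iso r e' inp' lab' v' e inp lab v.
Proof.
case=> f [g] [fv fg gf edges labs]; exists g, f; split.
- by have [_ <-] := fg v (within_refl _ _ _); rewrite fv.
- exact: gf.
- exact: fg.
- move=> u' w' /gf [hu fu] /gf [hw fw].
  by rewrite -edges // fu fw.
- by move=> u' /gf [hu fu]; have [<- <-] := labs _ hu; rewrite fu.
Qed.

Section RelaxedIso.
Variables (Sigma Gamma : finType) (Delta r : nat) (psi : verifier Sigma Gamma).
Hypothesis psi_verifier : is_verifier Delta r psi.

Lemma relaxed_iso n (e : rel 'I_n) inp (mu : 'I_n -> option Gamma) v
    n' (e' : rel 'I_n') inp' (mu' : 'I_n' -> option Gamma) v' :
  in_family Delta e -> in_family Delta e' ->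
  ball_iso r e inp mu v e' inp' mu' v' ->
  relaxed r psi e inp mu v -> relaxed r psi e' inp' mu' v'.
Proof.
move=> fam fam' iso; have [f [g [fv fg gf edges labs]]] := iso.
case=> [[u [hu none_u]]|hpsi].
  left; exists (f u); have [_ ->] := labs u hu.
  by have [hfu _] := fg u hu.
right=> lab' hlab'.
have iso_lab : ball_iso r e inp (lab' \o f) v e' inp' lab' v'.
  by exists f, g; split=> // u /labs [].
rewrite -(psi_verifier fam fam' iso_lab); apply: hpsi => u hu /=.
by have [hfu _] := fg u hu; have [_ <-] := labs u hu; exact: hlab'.
Qed.

End RelaxedIso.

Lemma relaxed_ext (Sigma Gamma : finType) r (psi : verifier Sigma Gamma) n
    (e : rel 'I_n) inp (mu1 mu2 : 'I_n -> option Gamma) v :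
  (forall u, within e r v u -> mu1 u = mu2 u) ->
  relaxed r psi e inp mu1 v -> relaxed r psi e inp mu2 v.
Proof.
move=> mu12; case=> [[u [hu none_u]]|hpsi]; first by left; exists u; rewrite -mu12.
by right=> lab hlab; apply: hpsi => u hu; rewrite mu12 ?hlab.
Qed.

Section BallEmbedding.
Variables (n n0 : nat) (e : rel 'I_n) (v : 'I_n) (R : nat) (d : 'I_n0).
Hypothesis ball_fits : #|ball e R v| <= n0.
Local Notation B := (ball e R v).

(* The ball is renumbered as 0, ..., #|B| - 1 inside 'I_n0; the remaining
   indices are isolated padding nodes, and [d] is the junk code of nodes
   outside the ball. *)
Definition ball_code (u : 'I_n) : 'I_n0 := insubd d (index u (enum B)).
Definition ball_decode (i : 'I_n0) : 'I_n := nth v (enum B) i.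
Definition ball_graph : rel 'I_n0 :=
  fun i j => [&& i < #|B|, j < #|B| & e (ball_decode i) (ball_decode j)].

Lemma ball_code_val u : u \in B -> val (ball_code u) = index u (enum B).
Proof.
move=> uB; rewrite /ball_code val_insubd (leq_trans _ ball_fits) //.
by rewrite cardE index_mem mem_enum.
Qed.

Lemma ball_code_lt u : u \in B -> ball_code u < #|B|.
Proof. by move=> uB; rewrite ball_code_val // cardE index_mem mem_enum. Qed.

Lemma ball_codeK u : u \in B -> ball_decode (ball_code u) = u.
Proof. by move=> uB; rewrite /ball_decode ball_code_val // nth_index ?mem_enum. Qed.

Lemma ball_decodeK (i : 'I_n0) : i < #|B| -> ball_code (ball_decode i) = i.
Proof.
move=> iB; apply: val_inj.
by rewrite /ball_code val_insubd index_uniq ?enum_uniq -?cardE ?ltn_ord.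
Qed.

Lemma ball_graph_family Delta : in_family Delta e -> in_family Delta ball_graph.
Proof.
case=> sym [irr deg]; split; [|split].
- by move=> i j; rewrite /ball_graph andbCA sym.
- by move=> i; rewrite /ball_graph irr !andbF.
move=> i; case iB: (i < #|B|); last first.
  rewrite (_ : [set j | ball_graph i j] = set0) ?cards0 //.
  by apply/setP=> j; rewrite !inE /ball_graph iB.
have inj : {in [set j | ball_graph i j] &, injective ball_decode}.
  move=> j k; rewrite !inE /ball_graph cardE => /and3P [_ jB _] /and3P [_ kB _] jk.
  by apply/val_inj/eqP; rewrite -(nth_uniq v jB kB (enum_uniq _)); apply/eqP.
rewrite -(card_in_imset inj); apply: leq_trans (deg (ball_decode i)).
apply: subset_leq_card; apply/subsetP=> u /imsetP [j].
by rewrite !inE => /and3P [_ _ ij] ->.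
Qed.

Lemma within_ball_graph k (i j : 'I_n0) : within ball_graph k i j ->
  (i == j) || [&& i < #|B|, j < #|B| & within e k (ball_decode i) (ball_decode j)].
Proof.
elim: k j => [|k IH] j /=; first by move->.
case/orP=> [/IH /orP [-> //|/and3P [-> -> ->]]|]; first by rewrite !orbT.
case/existsP=> w /andP [/IH hw /and3P [wB jB ewj]].
apply/orP; right; rewrite jB /=.
case/orP: hw => [/eqP ->|/and3P [-> _ hw]]; rewrite ?wB /=;
  by apply/orP; right; apply/existsP; exists (ball_decode w); rewrite ewj andbT ?within_refl.
Qed.

Lemma within_ball_code a k x y : a + k <= R ->
  within e a v x -> within e k x y -> within ball_graph k (ball_code x) (ball_code y).
Proof.
move=> akR hx; elim: k y akR => [|k IH] y akR; first by move/eqP ->; rewrite /= eqxx.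
have akR' : a + k <= R by rewrite (leq_trans _ akR) // addnS.
move=> hy /=; move: (hy) => /= /orP [/(IH _ akR') -> //|/existsP [w /andP [hw ewy]]].
apply/orP; right; apply/existsP; exists (ball_code w); rewrite (IH w akR' hw) /=.
have wB : w \in B by apply: mem_ball akR' (within_trans hx hw).
have yB : y \in B by apply: mem_ball akR (within_trans hx hy).
by rewrite /ball_graph !ball_code_lt ?ball_codeK.
Qed.

Lemma ball_iso_embed (Sigma Gamma : finType) r (inp : 'I_n -> Sigma)
    (lab : 'I_n -> Gamma) (lab0 : 'I_n0 -> Gamma) a x :
  a + r <= R -> within e a v x ->
  (forall u, within e r x u -> lab0 (ball_code u) = lab u) ->
  ball_iso r e inp lab x ball_graph (inp \o ball_decode) lab0 (ball_code x).
Proof.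
move=> arR hx hlab.
have ball_x u : within e r x u -> u \in B.
  by move=> hu; apply: mem_ball arR (within_trans hx hu).
have xB : x \in B by apply: ball_x (within_refl _ _ _).
exists ball_code, ball_decode; split=> //.
- move=> u hu; split; first exact: within_ball_code arR hx hu.
  exact/ball_codeK/ball_x.
- move=> u' /within_ball_graph /orP [/eqP <-|/and3P [_ u'B hu']].
    by rewrite ball_codeK // within_refl.
  by rewrite ball_decodeK // ball_codeK in hu' *.
- by move=> u w hu hw; rewrite /ball_graph !ball_code_lt ?ball_codeK ?ball_x.
- by move=> u hu; rewrite /= ball_codeK ?hlab ?ball_x.
Qed.

End BallEmbedding.

Section ConstantRadiusMend.
Variables (Sigma Gamma : finType) (Delta r : nat) (psi : verifier Sigma Gamma).
Hypothesis psi_verifier : is_verifier Delta r psi.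

Section MendInBall.
Variables (n n0 c : nat) (e : rel 'I_n) (inp : 'I_n -> Sigma).
Variables (mu : 'I_n -> option Gamma) (v : 'I_n) (d : 'I_n0).
Hypotheses (fam : in_family Delta e) (mu_accepted : relaxed_accepts r psi e inp mu).
Hypothesis ball_fits : #|ball e (c + 3 * r) v| <= n0.

Local Notation R := (c + 3 * r).
Local Notation B := (ball e R v).
Local Notation code := (ball_code e v R d).
Local Notation decode := (ball_decode e v R : 'I_n0 -> 'I_n).
Local Notation H := (ball_graph e v R : rel 'I_n0).

Definition restricted_labeling (i : 'I_n0) : option Gamma :=
  if (i < #|B|) && within e (c + 2 * r) v (decode i) then mu (decode i) else None.

Lemma restricted_labeling_code u :
  within e (c + 2 * r) v u -> restricted_labeling (code u) = mu u.
Proof.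
move=> hu; have uB : u \in B by apply: mem_ball hu; lia.
by rewrite /restricted_labeling ball_code_lt ?ball_codeK ?hu.
Qed.

Lemma restricted_labeling_accepted :
  relaxed_accepts r psi H (inp \o decode) restricted_labeling.
Proof.
move=> i; case iin: ((i < #|B|) && within e (c + 2 * r) v (decode i)); last first.
  by left; exists i; rewrite within_refl /restricted_labeling iin.
case/andP: iin => iB hx; rewrite -(ball_decodeK d iB).
have arR : c + 2 * r + r <= R by lia.
case: (boolP [exists w, within e r (decode i) w && ~~ within e (c + 2 * r) v w]).
  case/existsP=> w /andP [hw /negbTE hnw]; left; exists (code w); split.
    exact: within_ball_code arR hx hw.
  have wB : w \in B by apply: mem_ball arR (within_trans hx hw).
  by rewrite /restricted_labeling ball_code_lt ?ball_codeK ?hnw ?andbF.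
move/existsPn=> inner.
have iso : ball_iso r e inp mu (decode i) H (inp \o decode) restricted_labeling
                    (code (decode i)).
  apply: (ball_iso_embed ball_fits inp arR hx) => u hu.
  by apply: restricted_labeling_code; move: (inner u); rewrite hu negbK.
apply: (relaxed_iso psi_verifier fam _ iso (mu_accepted _)).
exact: ball_graph_family.
Qed.

Variable mu' : 'I_n0 -> option Gamma.
Hypothesis mend :
  is_mend r psi H (inp \o decode) restricted_labeling (code v) c mu'.

Definition glued_labeling (u : 'I_n) : option Gamma :=
  if within e c v u then mu' (code u) else mu u.

Lemma mend_keeps_outside u :
  within e (c + 2 * r) v u -> ~~ within e c v u -> mu' (code u) = mu u.
Proof.
move=> hu hnu; have uB : u \in B by apply: mem_ball hu; lia.
have vB : v \in B by apply: mem_ball (within_refl _ 0 v); lia.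
rewrite -(restricted_labeling_code hu); case: mend => _ _ _ changed.
apply/eqP; apply: contraNT hnu => /eqP /changed /within_ball_graph.
case/orP=> [/eqP vu|/and3P [_ _]]; last by rewrite !ball_codeK.
by have := congr1 decode vu; rewrite !ball_codeK // => ->; rewrite within_refl.
Qed.

Lemma glued_labeling_accepted : relaxed_accepts r psi e inp glued_labeling.
Proof.
move=> u; case hu: (within e (c + r) v u); last first.
  apply: relaxed_ext (mu_accepted u) => w hw; rewrite /glued_labeling.
  case hvw: (within e c v w) => //.
  by move: hu; rewrite (within_trans hvw (within_sym (proj1 fam) hw)).
have crR : c + r + r <= R by lia.
have iso : ball_iso r e inp glued_labeling u H (inp \o decode) mu' (code u).
  apply: (ball_iso_embed ball_fits inp crR hu) => w hw; rewrite /glued_labeling.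
  case: ifP => // /negbT; apply: mend_keeps_outside.
  by apply: within_mono (within_trans hu hw); lia.
case: mend => mu'_accepted _ _ _.
apply: (relaxed_iso psi_verifier _ fam (ball_iso_sym iso) (mu'_accepted _)).
exact: ball_graph_family.
Qed.

Lemma glued_labeling_mend : is_mend r psi e inp mu v c glued_labeling.
Proof.
case: (mend) => _ mend_v mend_none _; split.
- exact: glued_labeling_accepted.
- by rewrite /glued_labeling within_refl.
- move=> u; rewrite /glued_labeling; case: ifP => // hu /mend_none.
  by rewrite restricted_labeling_code //; apply: within_mono hu; lia.
- by move=> u; rewrite /glued_labeling; case: ifP.
Qed.

End MendInBall.

Lemma verifier_mendable_const T n0 :
  verifier_mendable Delta r psi T -> Delta.+1 ^ (T n0 + 3 * r) <= n0 ->
  verifier_mendable Delta r psi (fun _ => T n0).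
Proof.
move=> mendable small n e inp mu fam mu_accepted v.
have fits : #|ball e (T n0 + 3 * r) v| <= n0.
  by apply: leq_trans small; apply: card_ball; case: fam => _ [].
have d : 'I_n0 by exists 0; apply: leq_trans small; rewrite expn_gt0.
have [mu' mend] := mendable n0 _ _ _ (ball_graph_family n0 v _ fam)
  (restricted_labeling_accepted d fam mu_accepted fits)
  (ball_code e v (T n0 + 3 * r) d v).
by exists (glued_labeling (T n0) e mu v d mu'); apply: glued_labeling_mend.
Qed.

End ConstantRadiusMend.

Lemma little_o_log_exp_le T b k :
  little_o_log T -> exists n, b ^ (T n + k) <= n.
Proof.
move=> hT; have [N hN] := hT (2 * b.+1) isT.
pose n := maxn N (2 ^ (2 * k * b.+1)); exists n.
have n_gt0 : 0 < n by rewrite leq_max expn_gt0 orbT.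
have hTn : 2 * b.+1 * T n <= trunc_log 2 n by apply: hN; rewrite leq_maxl.
have hkn : 2 * k * b.+1 <= trunc_log 2 n by apply: trunc_log_max; rewrite ?leq_maxr.
apply: leq_trans (trunc_logP (isT : 1 < 2) n_gt0).
have [->|m_gt0] := posnP (T n + k); first by rewrite expn0 expn_gt0.
apply: (@leq_trans ((2 ^ b) ^ (T n + k))).
  by rewrite leq_exp2r // ltnW // ltn_expl.
rewrite -expnM leq_pexp2l //; nia.
Qed.

Theorem corollary8p6 :
  forall (Delta : nat) (Sigma Gamma : finType) (r : nat) (psi : verifier Sigma Gamma),
    is_verifier Delta r psi ->
    forall T : nat -> nat, little_o_log T ->
    problem_mendable Delta r psi T ->
    exists c : nat, problem_mendable Delta r psi (fun _ => c).
Proof.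
move=> Delta Sigma Gamma r psi _ T hT [psi' [psi'_verifier same mendable]].
have [n0 small] := little_o_log_exp_le Delta.+1 (3 * r) hT.
exists (T n0), psi'; split=> //.
exact: (verifier_mendable_const psi'_verifier mendable small).
Qed.
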